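(* Let $\nu>2$ and let $F_\nu$ be the CDF of the Student's $t$-distribution with $\nu$ degrees of freedom, location $0$ and scale $1$. For every real $m\in(0,\nu)$ and every $t>0$, $$\frac{1}{(1-F_\nu(t))(t^2+\nu)^{\frac{\nu-1}{2}}}\le\frac{\sqrt{t^2+\nu-m}}{\kappa_m},\qquad \kappa_m=\frac{\Gamma\left(\frac{\nu+1}{2}\right)(\nu-m)\,m^{\nu/2-1}}{2\sqrt{\pi}\,\Gamma\left(\frac{\nu}{2}\right)}.$$ *)

From Stdlib Require Import Reals.
From Coquelicot Require Import Coquelicot.
Open Scope R_scope.

Definition Gamma (x : R) : R :=
  RInt_gen (fun s => Rpower s (x - 1) * exp (- s)) (at_right 0) (Rbar_locally p_infty).

Definition student_pdf (nu x : R) : R :=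
  Gamma ((nu + 1) / 2) / (sqrt (nu * PI) * Gamma (nu / 2))
  * Rpower (1 + x ^ 2 / nu) (- ((nu + 1) / 2)).

Definition student_cdf (nu t : R) : R :=
  RInt_gen (student_pdf nu) (Rbar_locally m_infty) (at_point t).

Definition kappa (nu m : R) : R :=
  Gamma ((nu + 1) / 2) * (nu - m) * Rpower m (nu / 2 - 1)
  / (2 * sqrt PI * Gamma (nu / 2)).

From Stdlib Require Import Reals Lra Psatz Classical_Prop.
From Coquelicot Require Import Coquelicot.
Open Scope R_scope.

(* Inverting both sides, the claim is [kappa_m * phi t <= 1 - F t] with
   [phi x = (x^2 + nu)^(-(nu-1)/2) (x^2 + nu - m)^(-1/2)] ([tail_envelope]).
   On (0, oo) the Student density dominates [- kappa_m * phi']: with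
   [k = nu/2 - 1] this reduces to a cubic inequality in [x] and
   [sqrt (x^2 + nu - m)] together with [m^k (nu + k (nu - m)) <= nu^(k+1)],
   an instance of [ln p <= p - 1].  Integrating over [t, X], letting [X -> oo]
   and using that the density has total mass at most 1 gives the bound.  The
   mass bound is the Beta-Gamma identity: [Gamma((nu+1)/2) (1 + x^2/nu)^(-(nu+1)/2)]
   is the Gamma integral of [u^((nu-1)/2) e^(-u (1 + x^2/nu))]; exchanging the
   two integrals leaves a Gaussian integral in [x], bounded by [sqrt pi]. *)

(* Coquelicot's integral lemmas are stated over an arbitrary normed module,
   which is not inferred for functions [R -> R]. *)
Lemma ex_RInt_continuous_R (g : R -> R) a b :
  (forall z, Rmin a b <= z <= Rmax a b -> continuous g z) -> ex_RInt g a b.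
Proof. exact (ex_RInt_continuous (V := R_CompleteNormedModule) g a b). Qed.

Lemma ex_derive_continuous_R (g : R -> R) x : ex_derive g x -> continuous g x.
Proof. exact (ex_derive_continuous (V := R_NormedModule) g x). Qed.

Lemma ex_RInt_scal_R (g : R -> R) a b k :
  ex_RInt g a b -> ex_RInt (fun x => k * g x) a b.
Proof. exact (ex_RInt_scal (V := R_NormedModule) g a b k). Qed.

Lemma RInt_scal_R (g : R -> R) a b k :
  ex_RInt g a b -> RInt (fun x => k * g x) a b = k * RInt g a b.
Proof. exact (RInt_scal (V := R_CompleteNormedModule) g a b k). Qed.

Lemma RInt_point_R (g : R -> R) a : RInt g a a = 0.
Proof. exact (RInt_point (V := R_CompleteNormedModule) a g). Qed.

Lemma RInt_swap_R (g : R -> R) a b : ex_RInt g a b -> RInt g b a = - RInt g a b.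
Proof. intros H; symmetry; exact (opp_RInt_swap (V := R_CompleteNormedModule) g a b H). Qed.

Lemma RInt_Chasles_R (g : R -> R) a b c :
  ex_RInt g a b -> ex_RInt g b c -> RInt g a b + RInt g b c = RInt g a c.
Proof. exact (RInt_Chasles (V := R_CompleteNormedModule) g a b c). Qed.

Lemma RInt_comp_lin_R (g : R -> R) u v a b :
  ex_RInt g (u * a + v) (u * b + v) ->
  RInt (fun y => u * g (u * y + v)) a b = RInt g (u * a + v) (u * b + v).
Proof. exact (RInt_comp_lin (V := R_CompleteNormedModule) g u v a b). Qed.

Lemma RInt_le_subinterval (g : R -> R) a b c d :
  a <= c -> c <= d -> d <= b ->
  (forall x, a <= x <= b -> continuous g x) -> (forall x, a <= x <= b -> 0 <= g x) ->
  RInt g c d <= RInt g a b.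
Proof.
intros Hac Hcd Hdb Hg Hpos.
assert (Hex : forall p q, a <= p -> p <= q -> q <= b -> ex_RInt g p q).
{ intros p q Hp Hpq Hq; apply ex_RInt_continuous_R; intros z Hz; apply Hg.
  rewrite Rmin_left, Rmax_right in Hz; lra. }
rewrite <- (RInt_Chasles_R g a c b), <- (RInt_Chasles_R g c d b) by (apply Hex; lra).
assert (0 <= RInt g a c) by (apply RInt_ge_0; [lra | apply Hex; lra | intros; apply Hpos; lra]).
assert (0 <= RInt g d b) by (apply RInt_ge_0; [lra | apply Hex; lra | intros; apply Hpos; lra]).
lra.
Qed.

Lemma is_derive_RInt_continuous (g : R -> R) a x :
  (forall y, continuous g y) -> is_derive (RInt g a) x (g x).
Proof.
intros Hg; apply (is_derive_RInt g (RInt g a) a x); [| apply Hg].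
apply filter_forall; intros y; apply (RInt_correct (V := R_CompleteNormedModule)).
apply ex_RInt_continuous_R; intros; apply Hg.
Qed.

Lemma eq_of_same_derive (F G dF : R -> R) c d :
  (forall z, is_derive F z (dF z)) -> (forall z, is_derive G z (dF z)) ->
  F c = G c -> F d = G d.
Proof.
intros HF HG Hc.
assert (Hdiff : forall a b, a < b -> F b - G b = F a - G a).
{ intros a b Hab.
  destruct (MVT_cor2 (fun z => F z - G z) (fun _ => 0) a b Hab) as [e [He _]]; [|lra].
  intros e _; apply is_derive_Reals.
  replace 0 with (dF e - dF e) by ring.
  apply (is_derive_minus (V := R_NormedModule)); auto. }
destruct (Rtotal_order c d) as [H | [-> | H]];
  [specialize (Hdiff c d H) | | specialize (Hdiff d c H)]; lra.
Qed.

Section ParametricIntegrals.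

Variable f : R -> R -> R.
Hypothesis f_cont : forall u x, continuity_2d_pt f u x.

Lemma continuity_2d_pt_continuous_r u x : continuous (f u) x.
Proof.
apply filterlim_locally; intros eps; destruct (f_cont u x eps) as [d Hd].
exists d; intros y Hy; apply Hd; [rewrite Rminus_eq_0, Rabs_R0; apply cond_pos | exact Hy].
Qed.

Lemma continuity_2d_pt_continuous_l u x : continuous (fun v => f v x) u.
Proof.
apply filterlim_locally; intros eps; destruct (f_cont u x eps) as [d Hd].
exists d; intros v Hv; apply Hd; [exact Hv | rewrite Rminus_eq_0, Rabs_R0; apply cond_pos].
Qed.

Lemma continuity_2d_pt_swap x u : continuity_2d_pt (fun x u => f u x) x u.
Proof. intros eps; destruct (f_cont u x eps) as [d Hd]; exists d; intros; apply Hd; auto. Qed.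

Lemma ex_RInt_param u a b : ex_RInt (f u) a b.
Proof. apply ex_RInt_continuous_R; intros; apply continuity_2d_pt_continuous_r. Qed.

Lemma continuous_RInt_param_le a b u0 :
  a <= b -> continuous (fun u => RInt (f u) a b) u0.
Proof.
intros Hab; apply filterlim_locally; intros eps.
set (e := eps / (b - a + 1)).
assert (He : 0 < e) by (apply Rdiv_lt_0_compat; [apply cond_pos | lra]).
destruct (uniform_continuity_2d f (u0 - 1) (u0 + 1) a b (fun u x _ _ => f_cont u x)
  (mkposreal e He)) as [d Hd].
assert (Hd1 : 0 < Rmin d 1) by (apply Rmin_pos; [apply cond_pos | lra]).
exists (mkposreal _ Hd1); intros u Hu.
change (Rabs (u - u0) < Rmin d 1) in Hu.
assert (Hud : Rabs (u - u0) < d) by (eapply Rlt_le_trans; [exact Hu | apply Rmin_l]).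
assert (Hu1 : u0 - 1 <= u <= u0 + 1)
  by (assert (Rabs (u - u0) < 1) by (eapply Rlt_le_trans; [exact Hu | apply Rmin_r]);
      revert H; unfold Rabs; destruct Rcase_abs; lra).
change (Rabs (RInt (f u) a b - RInt (f u0) a b) < eps).
rewrite <- (RInt_minus (V := R_CompleteNormedModule)) by apply ex_RInt_param.
eapply Rle_lt_trans.
- apply (norm_RInt_le (fun x => minus (f u x) (f u0 x)) (fun _ => e) a b _ _ Hab).
  + intros x Hx; apply Rlt_le, (Hd u0 x u x); try lra.
    rewrite Rminus_eq_0, Rabs_R0; apply cond_pos.
  + apply (RInt_correct (V := R_CompleteNormedModule)).
    apply (ex_RInt_minus (V := R_CompleteNormedModule)); apply ex_RInt_param.
  + apply is_RInt_const.
- change ((b - a) * e < eps).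
  replace ((b - a) * e) with (eps - e) by (unfold e; field; lra).
  lra.
Qed.

Lemma continuous_RInt_param a b u0 : continuous (fun u => RInt (f u) a b) u0.
Proof.
destruct (Rle_dec a b) as [Hab | Hab]; [now apply continuous_RInt_param_le|].
apply continuous_ext with (fun u => - RInt (f u) b a).
{ intros u; rewrite RInt_swap_R by apply ex_RInt_param; apply Ropp_involutive. }
apply (continuous_opp (V := R_NormedModule) (fun u => RInt (f u) b a)).
apply continuous_RInt_param_le; lra.
Qed.

End ParametricIntegrals.

(* Both sides have derivative [RInt (f d) a b] in [d] and vanish at [d = c]. *)
Lemma RInt_RInt_swap (f : R -> R -> R) a b c d :
  (forall u x, continuity_2d_pt f u x) ->
  RInt (fun x => RInt (fun u => f u x) c d) a b = RInt (fun u => RInt (f u) a b) c d.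
Proof.
intros Hf.
pose proof (continuity_2d_pt_swap f Hf) as Hg.
assert (Hder : forall u x, is_derive (fun z => RInt (fun v => f v x) c z) u (f u x)).
{ intros u x; apply (is_derive_RInt_continuous (fun v => f v x)).
  intros; apply continuity_2d_pt_continuous_l, Hf. }
apply (eq_of_same_derive (fun d => RInt (fun x => RInt (fun u => f u x) c d) a b)
  (fun d => RInt (fun u => RInt (f u) a b) c d) (fun z => RInt (f z) a b) c d).
- intros z.
  replace (RInt (f z) a b)
    with (RInt (fun x => Derive (fun u => RInt (fun v => f v x) c u) z) a b)
    by (apply RInt_ext; intros; apply is_derive_unique, Hder).
  apply (is_derive_RInt_param (fun z x => RInt (fun v => f v x) c z)).
  + apply filter_forall; intros u x _; eexists; apply Hder.
  + intros x _; apply continuity_2d_pt_ext with f; [|apply Hf].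
    intros; symmetry; apply is_derive_unique, Hder.
  + apply filter_forall; intros y; apply ex_RInt_continuous_R; intros.
    apply (continuous_RInt_param (fun x u => f u x) Hg).
- intros z; apply (is_derive_RInt_continuous (fun u => RInt (f u) a b)).
  intros; apply continuous_RInt_param, Hf.
- rewrite RInt_point_R, (RInt_ext _ (fun _ => 0)) by (intros; apply RInt_point_R).
  rewrite (RInt_const (V := R_CompleteNormedModule)); apply Rmult_0_r.
Qed.

Lemma continuity_2d_pt_exp f u x :
  continuity_2d_pt f u x -> continuity_2d_pt (fun u x => exp (f u x)) u x.
Proof.
intros Hf; apply continuity_1d_2d_pt_comp; [|exact Hf].
apply derivable_continuous_pt, derivable_pt_exp.
Qed.

Lemma continuity_2d_pt_sqr f u x :
  continuity_2d_pt f u x -> continuity_2d_pt (fun u x => f u x ^ 2) u x.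
Proof.
intros Hf; apply continuity_2d_pt_ext with (fun u x => f u x * f u x); [intros; ring|].
now apply continuity_2d_pt_mult.
Qed.

Definition gauss (x : R) : R := exp (- x ^ 2).

Lemma gauss_continuous x : continuous gauss x.
Proof. apply ex_derive_continuous_R; unfold gauss; auto_derive; auto. Qed.

Lemma ex_RInt_gauss a b : ex_RInt gauss a b.
Proof. apply ex_RInt_continuous_R; intros; apply gauss_continuous. Qed.

Lemma gauss_ge0 x : 0 <= gauss x.
Proof. apply Rlt_le, exp_pos. Qed.

Lemma one_plus_sqr_pos s : 0 < 1 + s ^ 2.
Proof. nra. Qed.

Section GaussianIntegral.

(* With [I t = RInt gauss 0 t] and [J t = RInt (gauss_arctan t) 0 1], the
   substitution [x = t s] gives [J' = - (I^2)'], so [I^2 + J] is constant,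
   equal to [J 0 = atan 1 = PI / 4]. *)
Let gauss_arctan (t s : R) : R := exp (- (t ^ 2 * (1 + s ^ 2))) / (1 + s ^ 2).

Let gauss_arctan_dt (t s : R) : R := - (2 * t) * exp (- (t ^ 2 * (1 + s ^ 2))).

Let I (t : R) : R := RInt gauss 0 t.

Let J (t : R) : R := RInt (gauss_arctan t) 0 1.

Let ex_RInt_gauss_arctan t a b : ex_RInt (gauss_arctan t) a b.
Proof.
apply ex_RInt_continuous_R; intros s _; apply ex_derive_continuous_R; unfold gauss_arctan.
auto_derive; generalize (one_plus_sqr_pos s); lra.
Qed.

Let is_derive_gauss_arctan (t s : R) :
  is_derive (fun u : R => gauss_arctan u s) t (gauss_arctan_dt t s).
Proof.
unfold gauss_arctan, gauss_arctan_dt; auto_derive; [auto|].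
generalize (one_plus_sqr_pos s); intros; field_simplify; [|lra].
replace (t * (t * 1) * (1 + s * (s * 1))) with (t ^ 2 * (1 + s ^ 2)) by ring; field; lra.
Qed.

Let gauss_arctan_dt_continuous t s : continuity_2d_pt gauss_arctan_dt t s.
Proof.
unfold gauss_arctan_dt; apply continuity_2d_pt_mult.
- apply continuity_2d_pt_opp, continuity_2d_pt_mult;
    [apply continuity_2d_pt_const | apply continuity_2d_pt_id1].
- apply continuity_2d_pt_exp, continuity_2d_pt_opp, continuity_2d_pt_mult.
  + apply continuity_2d_pt_sqr, continuity_2d_pt_id1.
  + apply continuity_2d_pt_plus;
      [apply continuity_2d_pt_const | apply continuity_2d_pt_sqr, continuity_2d_pt_id2].
Qed.

Let is_derive_J (t : R) : is_derive J t (- 2 * gauss t * I t).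
Proof.
replace (- 2 * gauss t * I t) with (RInt (fun s => Derive (fun u => gauss_arctan u s) t) 0 1).
- apply (is_derive_RInt_param gauss_arctan 0 1 t).
  + apply filter_forall; intros u s _; eexists; apply is_derive_gauss_arctan.
  + intros s _; apply continuity_2d_pt_ext with gauss_arctan_dt;
      [|apply gauss_arctan_dt_continuous].
    intros; symmetry; apply is_derive_unique, is_derive_gauss_arctan.
  + apply filter_forall; intros; apply ex_RInt_gauss_arctan.
- assert (Hlin := RInt_comp_lin_R gauss t 0 0 1 (ex_RInt_gauss _ _)).
  rewrite Rmult_0_r, Rmult_1_r, !Rplus_0_r in Hlin.
  unfold I; rewrite <- Hlin, <- RInt_scal_R.
  2: { apply ex_RInt_scal_R, ex_RInt_continuous_R; intros; apply ex_derive_continuous_R.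
       unfold gauss; auto_derive; auto. }
  apply RInt_ext; intros s _.
  rewrite (is_derive_unique _ _ _ (is_derive_gauss_arctan t s)).
  unfold gauss_arctan_dt, gauss.
  replace (- (t ^ 2 * (1 + s ^ 2))) with (- t ^ 2 + - (t * s + 0) ^ 2) by ring.
  rewrite exp_plus; change (@eq _ ?a ?b) with (@eq R a b); ring.
Qed.

Lemma RInt_gauss_sqr_le t : (RInt gauss 0 t) ^ 2 <= PI / 4.
Proof.
assert (Hconst : I t * I t + J t = I 0 * I 0 + J 0).
{ apply (eq_of_same_derive (fun t => I t * I t + J t) (fun _ => I 0 * I 0 + J 0) (fun _ => 0) 0 t);
    [| intros; apply (is_derive_const (V := R_NormedModule)) | reflexivity].
  intros z.
  replace 0 with (gauss z * I z + I z * gauss z + - 2 * gauss z * I z) by ring.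
  assert (HI : is_derive I z (gauss z)) by (apply is_derive_RInt_continuous, gauss_continuous).
  apply (is_derive_plus (V := R_NormedModule)); [|apply is_derive_J].
  now apply (is_derive_mult (K := R_AbsRing)); [| | intros; apply Rmult_comm]. }
assert (HJ0 : J 0 = PI / 4).
{ rewrite <- atan_1; replace (atan 1) with (atan 1 - atan 0) by (rewrite atan_0; ring).
  apply is_RInt_unique, (is_RInt_derive (V := R_CompleteNormedModule) atan).
  - intros s _; apply is_derive_Reals; unfold gauss_arctan.
    replace (exp (- (0 ^ 2 * (1 + s ^ 2))) / (1 + s ^ 2)) with (/ (1 + s ^ 2)).
    + apply derivable_pt_lim_atan.
    + replace (- (0 ^ 2 * (1 + s ^ 2))) with 0 by ring; rewrite exp_0; field.
      generalize (one_plus_sqr_pos s); lra.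
  - intros s _; apply ex_derive_continuous_R; unfold gauss_arctan; auto_derive.
    generalize (one_plus_sqr_pos s); lra. }
assert (HJ : 0 <= J t).
{ apply RInt_ge_0; [lra | apply ex_RInt_gauss_arctan |].
  intros s _; apply Rlt_le, Rdiv_lt_0_compat; [apply exp_pos | apply one_plus_sqr_pos]. }
fold (I t); rewrite <- HJ0; unfold I at 3 in Hconst; rewrite RInt_point_R in Hconst; nra.
Qed.

End GaussianIntegral.

Lemma RInt_gauss_le_half_sqrt_PI L : 0 <= L -> RInt gauss 0 L <= sqrt PI / 2.
Proof.
intros HL; pose proof (RInt_gauss_sqr_le L) as Hsqr.
assert (0 <= RInt gauss 0 L) by (apply RInt_ge_0; auto using ex_RInt_gauss, gauss_ge0).
assert (Hpi : sqrt PI * sqrt PI = PI) by (apply sqrt_sqrt; generalize PI_RGT_0; lra).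
generalize (sqrt_pos PI); nra.
Qed.

Lemma RInt_gauss_opp L : RInt gauss (- L) 0 = RInt gauss 0 L.
Proof.
assert (Hlin := RInt_comp_lin_R gauss (-1) 0 0 L (ex_RInt_gauss _ _)).
rewrite Rmult_0_r, !Rplus_0_r in Hlin; replace (-1 * L) with (- L) in Hlin by ring.
rewrite RInt_swap_R, <- Hlin by apply ex_RInt_gauss.
rewrite (RInt_ext _ (fun y => -1 * gauss y)).
- rewrite RInt_scal_R by apply ex_RInt_gauss.
  lra.
- intros y _; unfold gauss; replace ((-1 * y + 0) ^ 2) with (y ^ 2) by ring.
  reflexivity.
Qed.

Lemma RInt_gauss_le Y X : Y <= X -> RInt gauss Y X <= sqrt PI.
Proof.
intros HYX; set (L := Rmax (Rabs Y) (Rabs X)).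
assert (HY : - L <= Y) by (generalize (Rmax_l (Rabs Y) (Rabs X)), (Rabs_maj2 Y); unfold L; lra).
assert (HX : X <= L) by (generalize (Rmax_r (Rabs Y) (Rabs X)), (Rle_abs X); unfold L; lra).
apply Rle_trans with (RInt gauss (- L) L).
- apply RInt_le_subinterval; auto using gauss_continuous, gauss_ge0.
- rewrite <- (RInt_Chasles_R gauss (- L) 0 L), RInt_gauss_opp by apply ex_RInt_gauss.
  assert (RInt gauss 0 L <= sqrt PI / 2) by (apply RInt_gauss_le_half_sqrt_PI; lra).
  lra.
Qed.

Lemma RInt_gauss_scaled_le c Y X : 0 < c -> Y <= X ->
  RInt (fun x => exp (- (c * x ^ 2))) Y X <= sqrt PI / sqrt c.
Proof.
intros Hc HYX; set (k := sqrt c).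
assert (Hk : 0 < k) by (apply sqrt_lt_R0; auto).
assert (Hkk : k * k = c) by (apply sqrt_sqrt; lra).
assert (Hex : ex_RInt (fun y => k * gauss (k * y + 0)) Y X).
{ apply ex_RInt_continuous_R; intros; apply ex_derive_continuous_R; unfold gauss.
  auto_derive; auto. }
rewrite (RInt_ext _ (fun y => / k * (k * gauss (k * y + 0)))).
2: { intros y _; unfold gauss; replace ((k * y + 0) ^ 2) with (c * y ^ 2) by (rewrite <- Hkk; ring).
     change (@eq _ ?a ?b) with (@eq R a b); field; lra. }
rewrite (RInt_scal_R _ _ _ _ Hex), (RInt_comp_lin_R _ _ _ _ _ (ex_RInt_gauss _ _)).
assert (RInt gauss (k * Y + 0) (k * X + 0) <= sqrt PI) by (apply RInt_gauss_le; nra).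
unfold Rdiv; rewrite Rmult_comm; apply Rmult_le_compat_r; [apply Rlt_le, Rinv_0_lt_compat|]; auto.
Qed.

Lemma is_RInt_gen_sup (F G : (R -> Prop) -> Prop) {FF : ProperFilter F} {FG : ProperFilter G}
  (f : R -> R) (D : R * R -> Prop) (M : R) :
  filter_prod F G D ->
  (forall p, D p -> ex_RInt f (fst p) (snd p)) ->
  (forall p, D p -> RInt f (fst p) (snd p) <= M) ->
  (forall p, D p ->
     filter_prod F G (fun q => D q /\ RInt f (fst p) (snd p) <= RInt f (fst q) (snd q))) ->
  exists l, is_RInt_gen f F G l
    /\ (forall p, D p -> RInt f (fst p) (snd p) <= l)
    /\ (forall e, 0 < e -> exists p, D p /\ l - e < RInt f (fst p) (snd p)).
Proof.
intros HD Hex HM Hmono.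
set (E := fun r => exists p, D p /\ r = RInt f (fst p) (snd p)).
assert (Hbound : bound E) by (exists M; intros r [p [Hp ->]]; auto).
assert (Hne : exists r, E r).
{ destruct HD as [P Q HP HQ HPQ].
  destruct (filter_ex P HP) as [x Hx], (filter_ex Q HQ) as [y Hy].
  exists (RInt f x y), (x, y); auto. }
destruct (completeness E Hbound Hne) as [l [Hub Hlub]].
assert (Hle : forall p, D p -> RInt f (fst p) (snd p) <= l)
  by (intros p Hp; apply Hub; exists p; auto).
assert (Happrox : forall e, 0 < e -> exists p, D p /\ l - e < RInt f (fst p) (snd p)).
{ intros e He; apply NNPP; intros Hno.
  assert (l <= l - e); [|lra].
  apply Hlub; intros r [p [Hp ->]]; apply Rnot_lt_le; intros Hlt; apply Hno; exists p; auto. }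
exists l; split; [|split; auto].
intros P [eps Heps]; unfold filtermapi.
destruct (Happrox eps (cond_pos eps)) as [p [Hp Hlt]].
generalize (Hmono p Hp); apply filter_imp; intros q [Hq Hpq].
exists (RInt f (fst q) (snd q)); split.
- apply (RInt_correct (V := R_CompleteNormedModule)); auto.
- apply Heps; change (Rabs (RInt f (fst q) (snd q) - l) < eps).
  specialize (Hle q Hq); rewrite Rabs_left1; lra.
Qed.

Lemma exp_le_compat x y : x <= y -> exp x <= exp y.
Proof. intros [H | ->]; [apply Rlt_le, exp_increasing, H | apply Rle_refl]. Qed.

Lemma ln_le_sub_1 y : 0 < y -> ln y <= y - 1.
Proof. intros Hy; generalize (exp_ineq1_le (ln y)); rewrite exp_ln; lra. Qed.

Definition gamma_integrand (a s : R) : R := Rpower s (a - 1) * exp (- s).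

Lemma gamma_integrand_continuous a s : 0 < s -> continuous (gamma_integrand a) s.
Proof.
intros Hs; apply ex_derive_continuous_R; unfold gamma_integrand, Rpower; auto_derive; auto.
Qed.

Lemma gamma_integrand_ge0 a s : 0 <= gamma_integrand a s.
Proof. apply Rlt_le, Rmult_lt_0_compat; apply exp_pos. Qed.

Lemma ex_RInt_gamma_integrand a x y : 0 < x -> 0 < y -> ex_RInt (gamma_integrand a) x y.
Proof.
intros Hx Hy; apply ex_RInt_continuous_R; intros z Hz; apply gamma_integrand_continuous.
apply Rlt_le_trans with (Rmin x y); [apply Rmin_glb_lt|]; tauto.
Qed.

(* [ln y <= y - 1] at [y = s / (2 (a - 1))]. *)
Lemma gamma_integrand_le a s : 1 < a -> 0 < s ->
  gamma_integrand a s <= exp ((a - 1) * (ln (2 * (a - 1)) - 1)) * exp (- s / 2).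
Proof.
intros Ha Hs; unfold gamma_integrand, Rpower; rewrite <- !exp_plus; apply exp_le_compat.
assert (Hc : 0 < 2 * (a - 1)) by lra.
assert (Hln := ln_le_sub_1 (s / (2 * (a - 1))) (Rdiv_lt_0_compat _ _ Hs Hc)).
rewrite ln_div in Hln by auto.
replace (s / (2 * (a - 1))) with (s / 2 / (a - 1)) in Hln by (field; lra).
apply Rmult_le_compat_l with (r := a - 1) in Hln; [|lra].
replace ((a - 1) * (s / 2 / (a - 1) - 1)) with (s / 2 - (a - 1)) in Hln by (field; lra).
lra.
Qed.

Lemma RInt_gamma_integrand_le a x y : 1 < a -> 0 < x -> x <= y ->
  RInt (gamma_integrand a) x y <= 2 * exp ((a - 1) * (ln (2 * (a - 1)) - 1)).
Proof.
intros Ha Hx Hxy; set (K := exp ((a - 1) * (ln (2 * (a - 1)) - 1))).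
assert (HK : 0 < K) by apply exp_pos.
assert (Hprim : RInt (fun s => K * exp (- s / 2)) x y
                = - 2 * K * exp (- y / 2) - - 2 * K * exp (- x / 2)).
{ apply is_RInt_unique, (is_RInt_derive (V := R_CompleteNormedModule)
    (fun s => - 2 * K * exp (- s / 2))).
  - intros; auto_derive; auto; unfold Rdiv; field.
  - intros s _; apply (ex_derive_continuous_R (fun s => K * exp (- s / 2))); auto_derive; auto. }
apply Rle_trans with (RInt (fun s => K * exp (- s / 2)) x y).
- apply RInt_le; auto.
  + apply ex_RInt_gamma_integrand; lra.
  + apply ex_RInt_continuous_R; intros; apply ex_derive_continuous_R; auto_derive; auto.
  + intros; apply gamma_integrand_le; lra.
- rewrite Hprim.
  assert (exp (- x / 2) <= 1) by (rewrite <- exp_0; apply exp_le_compat; lra).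
  generalize (exp_pos (- y / 2)); nra.
Qed.

Lemma Gamma_sup a : 1 < a ->
  (forall x y, 0 < x -> x <= y -> RInt (gamma_integrand a) x y <= Gamma a)
  /\ (forall e, 0 < e -> exists x y, 0 < x < y /\ Gamma a - e < RInt (gamma_integrand a) x y).
Proof.
intros Ha.
assert (Hright : forall p, 0 < p -> at_right 0 (fun x => 0 < x < p)).
{ intros p Hp; exists (mkposreal p Hp); intros x Hx Hx0; split; auto.
  change (Rabs (x - 0) < p) in Hx; rewrite Rminus_0_r, Rabs_right in Hx; lra. }
destruct (is_RInt_gen_sup (at_right 0) (Rbar_locally p_infty) (gamma_integrand a)
  (fun p => 0 < fst p < snd p) (2 * exp ((a - 1) * (ln (2 * (a - 1)) - 1))))
  as [l [Hl [Hle Happrox]]].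
- apply (Filter_prod _ _ _ (fun x => 0 < x < 1) (fun y => 1 < y));
    [apply Hright; lra | exists 1; auto |].
  intros x y Hx Hy; simpl; lra.
- intros p Hp; apply ex_RInt_gamma_integrand; lra.
- intros p Hp; apply RInt_gamma_integrand_le; lra.
- intros [p q] Hpq; simpl in Hpq.
  apply (Filter_prod _ _ _ (fun x => 0 < x < p) (fun y => q < y));
    [apply Hright; lra | exists q; auto |].
  intros x y Hx Hy; simpl; split; [lra|].
  apply RInt_le_subinterval; try lra.
  + intros; apply gamma_integrand_continuous; lra.
  + intros; apply gamma_integrand_ge0.
- assert (HGamma : Gamma a = l) by exact (is_RInt_gen_unique (V := R_CompleteNormedModule) _ _ Hl).
  rewrite HGamma.
  split.
  + intros x y Hx [Hxy | <-]; [apply (Hle (x, y)); simpl; lra|].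
    rewrite RInt_point_R; apply Rle_trans with (RInt (gamma_integrand a) x (x + 1));
      [|apply (Hle (x, x + 1)); simpl; lra].
    apply RInt_ge_0; [lra | apply ex_RInt_gamma_integrand; lra | intros; apply gamma_integrand_ge0].
  + intros e He; destruct (Happrox e He) as [[x y] Hxy]; exists x, y; exact Hxy.
Qed.

Lemma Gamma_pos a : 1 < a -> 0 < Gamma a.
Proof.
intros Ha; apply Rlt_le_trans with (RInt (gamma_integrand a) 1 2); [|apply Gamma_sup; lra].
apply RInt_gt_0; [lra | |intros; apply gamma_integrand_continuous; lra].
intros; apply Rmult_lt_0_compat; apply exp_pos.
Qed.

Lemma continuous_Rmax_l d x : continuous (fun y => Rmax y d) x.
Proof.
apply filterlim_locally; intros eps; exists eps; intros y Hy.
change (Rabs (y - x) < eps) in Hy; change (Rabs (Rmax y d - Rmax x d) < eps).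
revert Hy; unfold Rmax; destruct (Rle_dec y d), (Rle_dec x d); unfold Rabs;
  repeat destruct Rcase_abs; lra.
Qed.

Definition student_kernel (nu x : R) : R := Rpower (1 + x ^ 2 / nu) (- ((nu + 1) / 2)).

Lemma student_kernel_ge0 nu x : 0 <= student_kernel nu x.
Proof. apply Rlt_le, exp_pos. Qed.

Lemma student_kernel_continuous nu x : 0 < nu -> continuous (student_kernel nu) x.
Proof.
intros Hnu; apply ex_derive_continuous_R; unfold student_kernel, Rpower; auto_derive.
assert (0 <= x ^ 2 / nu) by (apply Rdiv_le_0_compat; nra); lra.
Qed.

Section StudentMass.

Variable nu : R.
Hypothesis Hnu : 2 < nu.

(* [RInt (joint d u x) 0 +oo = Gamma((nu+1)/2) * student_kernel nu x] up to the
   truncation [Rmax u d], which makes [joint d] continuous on the whole plane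
   (as [RInt_RInt_swap] requires) and is harmless for [u >= d > 0]. *)
Let joint (d u x : R) : R :=
  Rpower (Rmax u d) ((nu + 1) / 2 - 1) * exp (- (u * (1 + x ^ 2 / nu))).

Let joint_ge0 d u x : 0 <= joint d u x.
Proof. apply Rlt_le, Rmult_lt_0_compat; apply exp_pos. Qed.

Let joint_continuous d u x : 0 < d -> continuity_2d_pt (joint d) u x.
Proof.
intros Hd; apply continuity_2d_pt_mult.
- apply (continuity_1d_2d_pt_comp (fun v => Rpower (Rmax v d) ((nu + 1) / 2 - 1)) (fun u _ => u));
    [|apply continuity_2d_pt_id1].
  apply continuity_pt_filterlim.
  apply (continuous_comp (fun v => Rmax v d) (fun w => Rpower w ((nu + 1) / 2 - 1)));
    [apply continuous_Rmax_l|].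
  apply ex_derive_continuous_R; unfold Rpower; auto_derive.
  generalize (Rmax_r u d); lra.
- apply continuity_2d_pt_exp, continuity_2d_pt_opp, continuity_2d_pt_mult;
    [apply continuity_2d_pt_id1|].
  apply continuity_2d_pt_plus; [apply continuity_2d_pt_const|].
  apply continuity_2d_pt_mult; [|apply continuity_2d_pt_const].
  apply continuity_2d_pt_sqr, continuity_2d_pt_id2.
Qed.

Let one_plus_sqr_div_ge1 x : 1 <= 1 + x ^ 2 / nu.
Proof. assert (0 <= x ^ 2 / nu) by (apply Rdiv_le_0_compat; nra); lra. Qed.

Lemma RInt_gamma_integrand_mul_student_kernel_le d dl U x :
  0 < d -> 0 < dl < U -> d <= dl / (1 + x ^ 2 / nu) ->
  RInt (gamma_integrand ((nu + 1) / 2)) dl U * student_kernel nu x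
  <= RInt (fun u => joint d u x) d U.
Proof.
intros Hd [Hdl HU] Hle; set (c := 1 + x ^ 2 / nu); set (a := (nu + 1) / 2); fold c in Hle.
assert (Hc : 1 <= c) by apply one_plus_sqr_div_ge1.
assert (Hlin := RInt_comp_lin_R (gamma_integrand a) c 0 (dl / c) (U / c)).
replace (c * (dl / c) + 0) with dl in Hlin by (field; lra).
replace (c * (U / c) + 0) with U in Hlin by (field; lra).
rewrite <- (Hlin (ex_RInt_gamma_integrand _ _ _ Hdl (Rlt_trans _ _ _ Hdl HU))), Rmult_comm.
assert (HUc : dl / c < U / c) by (apply Rmult_lt_compat_r; [apply Rinv_0_lt_compat|]; lra).
assert (Hdlc : 0 < dl / c) by (apply Rdiv_lt_0_compat; lra).
rewrite <- RInt_scal_R.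
2: { apply ex_RInt_continuous_R; intros z Hz; apply ex_derive_continuous_R.
     unfold gamma_integrand, Rpower; auto_derive.
     rewrite Rmin_left in Hz by lra; nra. }
rewrite (RInt_ext _ (fun u => joint d u x)).
- apply RInt_le_subinterval; try lra.
  + unfold Rdiv; rewrite <- (Rmult_1_r U) at 2; apply Rmult_le_compat_l; [lra|].
    rewrite <- Rinv_1; apply Rinv_le_contravar; lra.
  + intros; apply (continuity_2d_pt_continuous_l (joint d)); intros; apply joint_continuous; lra.
  + intros; apply joint_ge0.
- intros u Hu; rewrite Rmin_left, Rmax_right in Hu by lra.
  unfold joint, student_kernel, gamma_integrand; fold c; fold a.
  rewrite Rmax_left by lra; rewrite Rplus_0_r, <- Rpower_mult_distr by lra.
  replace (- (c * u)) with (- (u * c)) by ring.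
  assert (Hpow : Rpower c (- a) * (c * Rpower c (a - 1)) = 1).
  { rewrite <- (Rpower_1 c) at 2 by lra; rewrite <- !Rpower_plus.
    replace (- a + (1 + (a - 1))) with 0 by ring; apply Rpower_O; lra. }
  transitivity (Rpower c (- a) * (c * Rpower c (a - 1)) * (Rpower u (a - 1) * exp (- (u * c))));
    [ | rewrite Hpow]; change (@eq _ ?p ?q) with (@eq R p q); ring.
Qed.

Lemma RInt_joint_le d u Y X : 0 < d -> d <= u -> Y <= X ->
  RInt (joint d u) Y X <= sqrt nu * sqrt PI * gamma_integrand (nu / 2) u.
Proof.
intros Hd Hu HYX; set (K := Rpower u ((nu + 1) / 2 - 1) * exp (- u)).
assert (HK : 0 <= K) by (apply Rlt_le, Rmult_lt_0_compat; apply exp_pos).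
rewrite (RInt_ext _ (fun x => K * exp (- (u / nu * x ^ 2)))).
2: { intros x _; unfold joint, K; rewrite Rmax_left by lra.
     replace (- (u * (1 + x ^ 2 / nu))) with (- u + - (u / nu * x ^ 2)) by (field; lra).
     rewrite exp_plus; change (@eq _ ?p ?q) with (@eq R p q); ring. }
rewrite RInt_scal_R
  by (apply ex_RInt_continuous_R; intros; apply ex_derive_continuous_R; auto_derive; auto).
assert (Hun : 0 < u / nu) by (apply Rdiv_lt_0_compat; lra).
apply Rle_trans with (K * (sqrt PI / sqrt (u / nu))).
- apply Rmult_le_compat_l; [exact HK | apply RInt_gauss_scaled_le; auto].
- unfold K, gamma_integrand; rewrite sqrt_div_alt by lra.
  replace ((nu + 1) / 2 - 1) with ((nu / 2 - 1) + / 2) by field.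
  rewrite Rpower_plus, Rpower_sqrt by lra.
  assert (0 < sqrt u) by (apply sqrt_lt_R0; lra).
  assert (0 < sqrt nu) by (apply sqrt_lt_R0; lra).
  right; field; lra.
Qed.

Lemma RInt_gamma_integrand_mul_RInt_student_kernel_le dl U Y X : 0 < dl < U -> Y <= X ->
  RInt (gamma_integrand ((nu + 1) / 2)) dl U * RInt (student_kernel nu) Y X
  <= sqrt nu * sqrt PI * Gamma (nu / 2).
Proof.
intros [Hdl HU] HYX.
set (d := dl / (1 + (Y ^ 2 + X ^ 2) / nu)).
assert (HcYX : 1 <= 1 + (Y ^ 2 + X ^ 2) / nu)
  by (assert (0 <= (Y ^ 2 + X ^ 2) / nu) by (apply Rdiv_le_0_compat; nra); lra).
assert (Hd : 0 < d) by (apply Rdiv_lt_0_compat; lra).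
assert (Hddl : d <= dl).
{ unfold d, Rdiv; rewrite <- (Rmult_1_r dl) at 2; apply Rmult_le_compat_l; [lra|].
  rewrite <- Rinv_1; apply Rinv_le_contravar; lra. }
assert (Hjoint := fun u x => joint_continuous d u x Hd).
assert (Hkernel : ex_RInt (student_kernel nu) Y X)
  by (apply ex_RInt_continuous_R; intros; apply student_kernel_continuous; lra).
rewrite <- (RInt_scal_R (student_kernel nu)) by exact Hkernel.
apply Rle_trans with (RInt (fun x => RInt (fun u => joint d u x) d U) Y X).
- apply RInt_le; auto.
  + apply ex_RInt_scal_R, Hkernel.
  + apply ex_RInt_continuous_R; intros.
    apply (continuous_RInt_param (fun x u => joint d u x) (continuity_2d_pt_swap _ Hjoint)).
  + intros x Hx; apply RInt_gamma_integrand_mul_student_kernel_le; try lra.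
    unfold d, Rdiv; apply Rmult_le_compat_l; [lra|].
    apply Rinv_le_contravar; [generalize (one_plus_sqr_div_ge1 x); lra|].
    apply Rplus_le_compat_l, Rmult_le_compat_r; [apply Rlt_le, Rinv_0_lt_compat; lra|].
    destruct (Rle_or_lt 0 x); nra.
- rewrite RInt_RInt_swap by exact Hjoint.
  apply Rle_trans with (RInt (fun u => sqrt nu * sqrt PI * gamma_integrand (nu / 2) u) d U).
  + apply RInt_le; try lra.
    * apply ex_RInt_continuous_R; intros; apply continuous_RInt_param, Hjoint.
    * apply ex_RInt_scal_R, ex_RInt_gamma_integrand; lra.
    * intros u Hu; apply RInt_joint_le; lra.
  + rewrite RInt_scal_R by (apply ex_RInt_gamma_integrand; lra).
    apply Rmult_le_compat_l; [apply Rmult_le_pos; apply sqrt_pos|].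
    apply Gamma_sup; lra.
Qed.

Lemma Gamma_mul_RInt_student_kernel_le Y X : Y <= X ->
  Gamma ((nu + 1) / 2) * RInt (student_kernel nu) Y X <= sqrt nu * sqrt PI * Gamma (nu / 2).
Proof.
intros HYX; set (B := sqrt nu * sqrt PI * Gamma (nu / 2)); set (Ih := RInt (student_kernel nu) Y X).
assert (HB : 0 <= B)
  by (apply Rmult_le_pos; [apply Rmult_le_pos; apply sqrt_pos | apply Rlt_le, Gamma_pos; lra]).
apply Rnot_lt_le; intros Hlt.
assert (HIh : 0 < Ih).
{ assert (HIh0 : 0 <= Ih)
    by (apply RInt_ge_0; auto using student_kernel_ge0;
        apply ex_RInt_continuous_R; intros; apply student_kernel_continuous; lra).
  destruct HIh0 as [|Hz]; [auto | rewrite <- Hz, Rmult_0_r in Hlt; lra]. }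
destruct (proj2 (Gamma_sup ((nu + 1) / 2) ltac:(lra)) ((Gamma ((nu + 1) / 2) * Ih - B) / Ih))
  as [dl [U [HdlU Happrox]]]; [apply Rdiv_lt_0_compat; lra|].
assert (Hbound := RInt_gamma_integrand_mul_RInt_student_kernel_le dl U Y X HdlU HYX).
fold Ih B in Hbound.
apply Rmult_lt_compat_r with (r := Ih) in Happrox; [|exact HIh].
replace ((Gamma ((nu + 1) / 2) - (Gamma ((nu + 1) / 2) * Ih - B) / Ih) * Ih) with B in Happrox
  by (field; lra).
lra.
Qed.

End StudentMass.

Lemma tail_polynomial_le nu m x s : 0 <= m -> 0 <= x <= s -> s ^ 2 = x ^ 2 + nu - m ->
  (nu - m) * x * (nu * s ^ 2 + m) <= (2 * nu + (nu - 2) * (nu - m)) * s ^ 3.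
Proof.
intros Hm Hxs Hs.
assert (Hr : nu - m = s ^ 2 - x ^ 2) by lra.
assert (Hrx : (nu - m) * x <= s ^ 3) by (rewrite Hr; generalize (pow_le x 3 (proj1 Hxs)); nra).
assert (Hr0 : 0 <= nu - m) by (rewrite Hr; nra).
assert (Hs3 : 0 <= s ^ 3) by (apply pow_le; lra).
assert (nu * (nu - m) * x * s ^ 2 <= nu * (nu - m) * s ^ 3).
{ replace (nu * (nu - m) * s ^ 3) with (nu * (nu - m) * s * s ^ 2) by ring.
  apply Rmult_le_compat_r; [nra|]. apply Rmult_le_compat_l; nra. }
nra.
Qed.

Lemma Rpower_mul_one_add_le p k : 0 < p <= 1 -> 0 <= k -> Rpower p k * (1 + k * (1 - p)) <= 1.
Proof.
intros Hp Hk.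
apply Rle_trans with (exp (k * (p - 1)) * exp (k * (1 - p))).
- apply Rmult_le_compat; [apply Rlt_le, exp_pos | nra | | apply exp_ineq1_le].
  apply exp_le_compat, Rmult_le_compat_l; [exact Hk | apply ln_le_sub_1; lra].
- rewrite <- exp_plus, <- exp_0; apply exp_le_compat; lra.
Qed.

Lemma Rpower_mul_le_Rpower nu m : 0 < m <= nu -> 0 <= nu / 2 - 1 ->
  Rpower m (nu / 2 - 1) * (nu + (nu / 2 - 1) * (nu - m)) <= nu * Rpower nu (nu / 2 - 1).
Proof.
intros Hm Hk; set (k := nu / 2 - 1).
assert (Hp : 0 < m / nu <= 1).
{ split; [apply Rdiv_lt_0_compat; lra|].
  apply Rmult_le_reg_r with nu; [lra|]; unfold Rdiv; rewrite Rmult_assoc, Rinv_l; lra. }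
assert (Hle := Rpower_mul_one_add_le (m / nu) k Hp Hk).
unfold Rdiv in Hle; rewrite <- Rpower_mult_distr in Hle by (try apply Rinv_0_lt_compat; lra).
assert (HPnu : 0 < Rpower nu k) by apply exp_pos.
apply Rmult_le_compat_l with (r := nu * Rpower nu k) in Hle; [|nra].
replace (Rpower (/ nu) k) with (/ Rpower nu k) in Hle
  by (rewrite <- Rpower_Ropp; unfold Rpower; rewrite ln_Rinv by lra; f_equal; ring).
replace (nu * Rpower nu k * (Rpower m k * / Rpower nu k * (1 + k * (1 - m * / nu))))
  with (Rpower m k * (nu + k * (nu - m))) in Hle by (field; lra).
lra.
Qed.

Lemma tail_key_le nu m x s : 2 <= nu -> 0 < m < nu -> 0 <= x <= s -> s ^ 2 = x ^ 2 + nu - m ->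
  (nu - m) * Rpower m (nu / 2 - 1) * x * (nu * s ^ 2 + m)
  <= 2 * nu * Rpower nu (nu / 2 - 1) * s ^ 3.
Proof.
intros Hnu Hm Hxs Hss; set (Mk := Rpower m (nu / 2 - 1)); set (Nk := Rpower nu (nu / 2 - 1)).
assert (HMk : 0 < Mk) by apply exp_pos.
assert (Hs3 : 0 <= s ^ 3) by (apply pow_le; lra).
apply Rle_trans with (Mk * ((2 * nu + (nu - 2) * (nu - m)) * s ^ 3)).
- replace ((nu - m) * Mk * x * (nu * s ^ 2 + m)) with (Mk * ((nu - m) * x * (nu * s ^ 2 + m)))
    by ring.
  apply Rmult_le_compat_l; [lra | apply tail_polynomial_le; lra].
- assert (Hpow := Rpower_mul_le_Rpower nu m ltac:(lra) ltac:(lra)); fold Mk Nk in Hpow.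
  replace (Mk * ((2 * nu + (nu - 2) * (nu - m)) * s ^ 3))
    with (2 * s ^ 3 * (Mk * (nu + (nu / 2 - 1) * (nu - m)))) by field.
  replace (2 * nu * Nk * s ^ 3) with (2 * s ^ 3 * (nu * Nk)) by ring.
  apply Rmult_le_compat_l; lra.
Qed.

Lemma student_kernel_eq nu x : 0 < nu ->
  student_kernel nu x
  = Rpower (x ^ 2 + nu) (- ((nu - 1) / 2)) / (x ^ 2 + nu) * (nu * Rpower nu (nu / 2 - 1) * sqrt nu).
Proof.
intros Hnu; assert (Hw : 0 < x ^ 2 + nu) by nra.
unfold student_kernel; replace (1 + x ^ 2 / nu) with ((x ^ 2 + nu) * / nu) by (field; lra).
rewrite <- Rpower_mult_distr by (try apply Rinv_0_lt_compat; lra).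
replace (Rpower (/ nu) (- ((nu + 1) / 2))) with (Rpower nu ((nu / 2 - 1) + 1 + / 2))
  by (unfold Rpower; rewrite ln_Rinv by lra; f_equal; field).
replace (- ((nu + 1) / 2)) with (- ((nu - 1) / 2) + - (1)) by field.
rewrite !Rpower_plus, Rpower_Ropp with (y := 1), !Rpower_1, Rpower_sqrt by lra.
field; lra.
Qed.

Definition tail_envelope (nu m x : R) : R :=
  Rpower (x ^ 2 + nu) (- ((nu - 1) / 2)) * Rpower (x ^ 2 + nu - m) (- / 2).

Definition tail_envelope_deriv (nu m x : R) : R :=
  - x * (Rpower (x ^ 2 + nu) (- ((nu - 1) / 2)) / (x ^ 2 + nu))
  * (Rpower (x ^ 2 + nu - m) (- / 2) / (x ^ 2 + nu - m)) * (nu * (x ^ 2 + nu - m) + m).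

Lemma is_derive_tail_envelope nu m x : 0 < m < nu ->
  is_derive (tail_envelope nu m) x (tail_envelope_deriv nu m x).
Proof.
intros Hm; assert (0 < x ^ 2 + nu - m) by nra.
unfold tail_envelope, tail_envelope_deriv, Rpower; auto_derive;
  replace (x * (x * 1) + nu) with (x ^ 2 + nu) by ring;
  replace (x ^ 2 + nu + - m) with (x ^ 2 + nu - m) by ring; [lra | field; lra].
Qed.

Lemma student_kernel_ge_tail_envelope_deriv nu m x : 2 < nu -> 0 < m < nu -> 0 < x ->
  sqrt nu * (nu - m) * Rpower m (nu / 2 - 1) / 2 * (- tail_envelope_deriv nu m x)
  <= student_kernel nu x.
Proof.
intros Hnu Hm Hx.
assert (Hw : 0 < x ^ 2 + nu) by nra; assert (Hwm : 0 < x ^ 2 + nu - m) by nra.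
set (s := sqrt (x ^ 2 + nu - m)); assert (Hs : 0 < s) by (apply sqrt_lt_R0; lra).
assert (Hss : s ^ 2 = x ^ 2 + nu - m) by (apply pow2_sqrt; lra).
assert (Hxs : x <= s) by (apply Rsqr_incr_0_var; unfold Rsqr; nra).
set (A := Rpower (x ^ 2 + nu) (- ((nu - 1) / 2)) / (x ^ 2 + nu)).
assert (HA : 0 < A) by (apply Rdiv_lt_0_compat; [apply exp_pos | lra]).
set (Mk := Rpower m (nu / 2 - 1)); set (Nk := Rpower nu (nu / 2 - 1)).
assert (Hsnu : 0 < sqrt nu) by (apply sqrt_lt_R0; lra).
assert (Hinner := tail_key_le nu m x s ltac:(lra) Hm ltac:(lra) Hss); fold Mk Nk in Hinner.
rewrite student_kernel_eq by lra; fold A Nk.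
unfold tail_envelope_deriv; fold A; fold Mk.
rewrite (Rpower_Ropp _ (/ 2)), Rpower_sqrt by lra; fold s; rewrite <- Hss.
replace (sqrt nu * (nu - m) * Mk / 2 * - (- x * A * (/ s / s ^ 2) * (nu * s ^ 2 + m)))
  with (A * sqrt nu / (2 * s ^ 3) * ((nu - m) * Mk * x * (nu * s ^ 2 + m))) by (field; lra).
replace (A * (nu * Nk * sqrt nu)) with (A * sqrt nu / (2 * s ^ 3) * (2 * nu * Nk * s ^ 3))
  by (field; lra).
apply Rmult_le_compat_l; [|exact Hinner].
apply Rlt_le, Rdiv_lt_0_compat; [nra | generalize (pow_lt s 3 Hs); lra].
Qed.

Lemma tail_envelope_le_inv nu m X : 2 < nu -> 0 < m < nu -> 1 <= X ->
  0 < tail_envelope nu m X <= / X.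
Proof.
intros Hnu Hm HX; assert (Hwm : 0 < X ^ 2 + nu - m) by nra.
assert (HP : Rpower (X ^ 2 + nu) (- ((nu - 1) / 2)) <= 1).
{ apply Rle_trans with (exp 0); [apply exp_le_compat | rewrite exp_0; lra].
  assert (0 <= ln (X ^ 2 + nu)) by (rewrite <- ln_1; apply ln_le; nra).
  nra. }
assert (HPpos : 0 < Rpower (X ^ 2 + nu) (- ((nu - 1) / 2))) by apply exp_pos.
unfold tail_envelope; rewrite (Rpower_Ropp _ (/ 2)), Rpower_sqrt by lra.
assert (Hsqrt : X <= sqrt (X ^ 2 + nu - m))
  by (rewrite <- (sqrt_pow2 X) at 1 by lra; apply sqrt_le_1_alt; lra).
assert (0 < / sqrt (X ^ 2 + nu - m)) by (apply Rinv_0_lt_compat; lra).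
assert (/ sqrt (X ^ 2 + nu - m) <= / X) by (apply Rinv_le_contravar; lra).
split; nra.
Qed.

Section StudentTail.

Variable nu : R.
Hypothesis Hnu : 2 < nu.

Let student_const : R := Gamma ((nu + 1) / 2) / (sqrt (nu * PI) * Gamma (nu / 2)).

Let student_const_pos : 0 < student_const.
Proof.
apply Rdiv_lt_0_compat; [apply Gamma_pos; lra|].
apply Rmult_lt_0_compat;
  [apply sqrt_lt_R0, Rmult_lt_0_compat, PI_RGT_0; lra | apply Gamma_pos; lra].
Qed.

Let student_pdf_eq x : student_pdf nu x = student_const * student_kernel nu x.
Proof. reflexivity. Qed.

Lemma student_pdf_continuous x : continuous (student_pdf nu) x.
Proof.
apply continuous_ext with (fun x => student_const * student_kernel nu x); [reflexivity|].
apply (continuous_scal_r student_const (student_kernel nu)), student_kernel_continuous; lra.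
Qed.

Lemma student_pdf_ge0 x : 0 <= student_pdf nu x.
Proof. rewrite student_pdf_eq; apply Rmult_le_pos; [lra | apply student_kernel_ge0]. Qed.

Lemma ex_RInt_student_pdf a b : ex_RInt (student_pdf nu) a b.
Proof. apply ex_RInt_continuous_R; intros; apply student_pdf_continuous. Qed.

Lemma RInt_student_pdf_le_1 Y X : Y <= X -> RInt (student_pdf nu) Y X <= 1.
Proof.
intros HYX; change (RInt (fun x => student_const * student_kernel nu x) Y X <= 1).
rewrite RInt_scal_R
  by (apply ex_RInt_continuous_R; intros; apply student_kernel_continuous; lra).
assert (HGamma := Gamma_mul_RInt_student_kernel_le nu Hnu Y X HYX).
assert (Hnu' : 0 < sqrt nu) by (apply sqrt_lt_R0; lra).
assert (HPI : 0 < sqrt PI) by apply sqrt_lt_R0, PI_RGT_0.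
assert (HG : 0 < Gamma (nu / 2)) by (apply Gamma_pos; lra).
unfold student_const; rewrite sqrt_mult by (generalize PI_RGT_0; lra).
apply Rmult_le_reg_l with (sqrt nu * sqrt PI * Gamma (nu / 2)); [apply Rmult_lt_0_compat; nra|].
replace (sqrt nu * sqrt PI * Gamma (nu / 2) *
  (Gamma ((nu + 1) / 2) / (sqrt nu * sqrt PI * Gamma (nu / 2)) * RInt (student_kernel nu) Y X))
  with (Gamma ((nu + 1) / 2) * RInt (student_kernel nu) Y X) by (field; repeat split; lra).
lra.
Qed.

Lemma student_cdf_approx t e : 0 < e ->
  exists Y, Y < t /\ student_cdf nu t - e < RInt (student_pdf nu) Y t.
Proof.
intros He.
destruct (is_RInt_gen_sup (Rbar_locally m_infty) (at_point t) (student_pdf nu)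
  (fun p => fst p < t /\ snd p = t) 1) as [l [Hl [_ Happrox]]].
- apply (Filter_prod _ _ _ (fun y => y < t) (fun z => z = t));
    [exists t; auto | reflexivity | auto].
- intros; apply ex_RInt_student_pdf.
- intros [y z] [Hy Hz]; apply RInt_student_pdf_le_1; simpl in *; lra.
- intros [y z] [Hy Hz]; simpl in *; subst z.
  apply (Filter_prod _ _ _ (fun y' => y' < y) (fun z => z = t)); [exists y; auto | reflexivity|].
  intros y' z Hy' ->; simpl; split; [lra|].
  apply RInt_le_subinterval; auto using student_pdf_continuous, student_pdf_ge0; lra.
- assert (Hcdf : student_cdf nu t = l)
    by exact (is_RInt_gen_unique (V := R_CompleteNormedModule) _ _ Hl).
  destruct (Happrox e He) as [[Y z] [[HY Hz] Hlt]]; simpl in *; subst z.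
  exists Y; rewrite Hcdf; auto.
Qed.

Lemma student_cdf_add_RInt_le_1 t X : t <= X ->
  student_cdf nu t + RInt (student_pdf nu) t X <= 1.
Proof.
intros HtX; apply Rle_plus_epsilon; intros e He.
destruct (student_cdf_approx t e He) as [Y [HY Happrox]].
assert (Hmass : RInt (student_pdf nu) Y X <= 1) by (apply RInt_student_pdf_le_1; lra).
rewrite <- (RInt_Chasles_R _ Y t X) in Hmass by apply ex_RInt_student_pdf.
lra.
Qed.

Variable m : R.
Hypothesis Hm : 0 < m < nu.

Lemma kappa_pos : 0 < kappa nu m.
Proof.
apply Rdiv_lt_0_compat.
- repeat apply Rmult_lt_0_compat; [apply Gamma_pos | | apply exp_pos]; lra.
- repeat apply Rmult_lt_0_compat; [| apply sqrt_lt_R0, PI_RGT_0 | apply Gamma_pos]; lra.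
Qed.

Lemma kappa_mul_tail_envelope_deriv_le x : 0 < x ->
  kappa nu m * - tail_envelope_deriv nu m x <= student_pdf nu x.
Proof.
intros Hx; rewrite student_pdf_eq.
replace (kappa nu m) with (student_const * (sqrt nu * (nu - m) * Rpower m (nu / 2 - 1) / 2)).
- rewrite Rmult_assoc; apply Rmult_le_compat_l; [lra|].
  apply student_kernel_ge_tail_envelope_deriv; lra.
- unfold kappa, student_const; rewrite sqrt_mult by (generalize PI_RGT_0; lra).
  assert (0 < sqrt nu) by (apply sqrt_lt_R0; lra).
  assert (0 < sqrt PI) by apply sqrt_lt_R0, PI_RGT_0.
  assert (0 < Gamma (nu / 2)) by (apply Gamma_pos; lra).
  field; repeat split; lra.
Qed.

Lemma RInt_student_pdf_ge_tail_envelope t X : 0 < t -> t < X ->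
  kappa nu m * (tail_envelope nu m t - tail_envelope nu m X) <= RInt (student_pdf nu) t X.
Proof.
intros Ht HtX.
destruct (MVT_cor2 (fun x => RInt (student_pdf nu) t x + kappa nu m * tail_envelope nu m x)
  (fun x => student_pdf nu x + kappa nu m * tail_envelope_deriv nu m x) t X HtX)
  as [c [Hc Hct]].
- intros c _; apply is_derive_Reals, (is_derive_plus (V := R_NormedModule)).
  + apply is_derive_RInt_continuous, student_pdf_continuous.
  + apply is_derive_Reals, derivable_pt_lim_scal, is_derive_Reals, is_derive_tail_envelope, Hm.
- assert (0 <= student_pdf nu c + kappa nu m * tail_envelope_deriv nu m c)
    by (generalize (kappa_mul_tail_envelope_deriv_le c ltac:(lra)); lra).
  rewrite RInt_point_R in Hc; nra.
Qed.

Lemma kappa_mul_tail_envelope_le t : 0 < t ->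
  kappa nu m * tail_envelope nu m t <= 1 - student_cdf nu t.
Proof.
intros Ht; apply Rle_plus_epsilon; intros e He.
set (X := Rmax (t + 1) (kappa nu m / e + 1)).
assert (HX1 : t + 1 <= X) by apply Rmax_l; assert (HX2 : kappa nu m / e + 1 <= X) by apply Rmax_r.
assert (Hke : 0 < kappa nu m / e) by (apply Rdiv_lt_0_compat; [apply kappa_pos | lra]).
assert (Henv := tail_envelope_le_inv nu m X Hnu Hm ltac:(lra)).
assert (kappa nu m * tail_envelope nu m X <= e).
{ apply Rle_trans with (kappa nu m * / X);
    [apply Rmult_le_compat_l; [apply Rlt_le, kappa_pos | lra]|].
  apply Rmult_le_reg_r with X; [lra|]; rewrite Rmult_assoc, Rinv_l by lra.
  replace (kappa nu m) with (kappa nu m / e * e) by (field; lra); nra. }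
assert (Htail := RInt_student_pdf_ge_tail_envelope t X Ht ltac:(lra)).
assert (Hmass := student_cdf_add_RInt_le_1 t X ltac:(lra)).
lra.
Qed.

End StudentTail.

Theorem lemma1 (nu m t : R) (Hnu : 2 < nu) (Hm0 : 0 < m) (Hm1 : m < nu) (Ht : 0 < t) :
  1 / ((1 - student_cdf nu t) * Rpower (t ^ 2 + nu) ((nu - 1) / 2))
  <= sqrt (t ^ 2 + nu - m) / kappa nu m.
Proof.
assert (Hk := kappa_pos nu Hnu m (conj Hm0 Hm1)).
assert (Hbound := kappa_mul_tail_envelope_le nu Hnu m (conj Hm0 Hm1) t Ht).
set (P := Rpower (t ^ 2 + nu) ((nu - 1) / 2)); assert (HP : 0 < P) by apply exp_pos.
set (s := sqrt (t ^ 2 + nu - m)); assert (Hs : 0 < s) by (apply sqrt_lt_R0; nra).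
replace (tail_envelope nu m t) with (/ (P * s)) in Hbound
  by (unfold tail_envelope; rewrite !Rpower_Ropp, Rpower_sqrt by nra; fold P s; field; lra).
replace (s / kappa nu m) with (/ (kappa nu m / s)) by (field; lra).
unfold Rdiv at 1; rewrite Rmult_1_l; apply Rinv_le_contravar.
- apply Rdiv_lt_0_compat; lra.
- apply Rmult_le_reg_r with (/ P); [apply Rinv_0_lt_compat; lra|].
  replace ((1 - student_cdf nu t) * P * / P) with (1 - student_cdf nu t) by (field; lra).
  replace (kappa nu m / s * / P) with (kappa nu m * / (P * s)) by (field; lra).
  exact Hbound.
Qed.
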